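(* Let $\phi$ be a reflexive $(\sigma,\varepsilon)$-sesquilinear form on a right vector space $V$ over a division ring $K$, not identically zero, and suppose there exists a nonzero isotropic vector. Then $V$ is spanned by its isotropic vectors if and only if both (a) $\phi$ is trace-valued, and (b) there exists an isotropic vector not contained in $\mathrm{Rad}(\phi)$.
   Context: Let $K$ be a division ring, $\sigma$ an anti-automorphism of $K$ and $\varepsilon\in K^*$ with $\varepsilon^{\sigma}=\varepsilon^{-1}$ and $t^{\sigma^2}=\varepsilon t\varepsilon^{-1}$ for all $t\in K$. For a right $K$-vector space $V$, a reflexive $(\sigma,\varepsilon)$-sesquilinear form is a map $\phi:V\times V\to K$ with $\phi(x,y\alpha+z\beta)=\phi(x,y)\alpha+\phi(x,z)\beta$ and $\phi(y,x)=\phi(x,y)^{\sigma}\varepsilon$ for all $x,y,z\in V$, $\alpha,\beta\in K$. A vector $a$ is isotropic if $\phi(a,a)=0$. $\mathrm{Rad}(\phi)=\{a\in V:\phi(a,x)=0\ \forall x\in V\}$. The form $\phi$ is trace-valued if $\phi(x,x)\in\{t+t^{\sigma}\varepsilon: t\in K\}$ for every $x\in V$. *)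

From HB Require Import structures.
From mathcomp Require Import all_boot all_order all_algebra.
Set Implicit Arguments. Unset Strict Implicit. Unset Printing Implicit Defensive.
Import GRing.Theory.
Local Open Scope ring_scope.

Definition division_ring (K : unitRingType) : Prop :=
  forall x : K, x != 0 -> x \is a GRing.unit.

(* A right K-vector space is modelled as a left module over the converse ring K^c:
   for v : V and a : K we write the right scalar product  v.a  as  (a : K^c) *: v.
   Then v.(a*b) = (v.a).b as required. *)
Definition rscale (K : unitRingType) (V : lmodType K^c) (v : V) (a : K) : V :=
  (a : K^c) *: v.

Definition anti_automorphism (K : unitRingType) (sigma : K -> K) : Prop :=
  [/\ forall a b, sigma (a + b) = sigma a + sigma b,
      forall a b, sigma (a * b) = sigma b * sigma a &
      bijective sigma].

Definition sigma_eps_pair (K : unitRingType) (sigma : K -> K) (eps : K) : Prop :=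
  [/\ anti_automorphism sigma, eps != 0, sigma eps = eps^-1 &
      forall t, sigma (sigma t) = eps * t * eps^-1].

Definition reflexive_sesquilinear (K : unitRingType) (V : lmodType K^c)
  (sigma : K -> K) (eps : K) (phi : V -> V -> K) : Prop :=
  (forall x y z (a b : K),
      phi x (rscale y a + rscale z b) = phi x y * a + phi x z * b) /\
  (forall x y, phi y x = sigma (phi x y) * eps).

Definition isotropic (K : unitRingType) (V : lmodType K^c) (phi : V -> V -> K) (a : V) : Prop :=
  phi a a = 0.

Definition in_Rad (K : unitRingType) (V : lmodType K^c) (phi : V -> V -> K) (a : V) : Prop :=
  forall x, phi a x = 0.

Definition trace_valued (K : unitRingType) (V : lmodType K^c)
  (sigma : K -> K) (eps : K) (phi : V -> V -> K) : Prop :=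
  forall x, exists t : K, phi x x = t + sigma t * eps.

Definition spanned_by_isotropic (K : unitRingType) (V : lmodType K^c)
  (phi : V -> V -> K) : Prop :=
  forall v : V, exists s : seq (V * K),
    (forall p, p \in s -> isotropic phi p.1) /\
    v = \sum_(p <- s) rscale p.1 p.2.

From HB Require Import structures.
From mathcomp Require Import all_boot all_order all_algebra.
From Stdlib Require Import Classical.
Set Implicit Arguments. Unset Strict Implicit. Unset Printing Implicit Defensive.
Import GRing.Theory.
Local Open Scope ring_scope.

(* Write  tr t := t + t^sigma eps  for the trace map.  The basic identity is
     phi(u + v, u + v) = phi(u, u) + phi(v, v) + tr (phi(u, v)),
   and right multiples of isotropic vectors are isotropic.

   (=>)  By induction on an isotropic combination, phi(v, v) is a trace for
         every vector v, so phi is trace-valued.  If phi(x0, y0) <> 0 and x0 is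
         a combination of isotropic vectors, one of them pairs non-trivially
         with y0, hence lies outside the radical.
   (<=)  Let a be isotropic with phi(a, b) <> 0 for some b.  If phi(a, w) <> 0,
         trace-valuedness gives c with w + a c isotropic, so
         w = (w + a c) + a (-c) is an isotropic combination.  An arbitrary v
         with phi(a, v) = 0 is split as v = (v + b) + (-b).
   The lemmas are proved in a section under only the algebraic hypotheses they
   use. *)

Section ReflexiveSesquilinear.

Variables (K : unitRingType) (V : lmodType K^c).
Variables (sigma : K -> K) (eps : K) (phi : V -> V -> K).

Hypothesis sigmaD : forall s t, sigma (s + t) = sigma s + sigma t.
Hypothesis sigmaM : forall s t, sigma (s * t) = sigma t * sigma s.
Hypothesis phi_lin : forall x y z (a b : K),
  phi x (rscale y a + rscale z b) = phi x y * a + phi x z * b.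
Hypothesis phi_refl : forall x y, phi y x = sigma (phi x y) * eps.

Definition sesq_trace (t : K) : K := t + sigma t * eps.

Lemma sigma0 : sigma 0 = 0.
Proof. by apply: (addrI (sigma 0)); rewrite -sigmaD !addr0. Qed.

Lemma sigmaN t : sigma (- t) = - sigma t.
Proof. by apply/eqP; rewrite -addr_eq0 -sigmaD addNr sigma0. Qed.

Lemma sesq_traceD s t : sesq_trace (s + t) = sesq_trace s + sesq_trace t.
Proof. by rewrite /sesq_trace sigmaD mulrDl addrACA. Qed.

Lemma sesq_traceN t : sesq_trace (- t) = - sesq_trace t.
Proof. by rewrite /sesq_trace sigmaN mulNr opprD. Qed.

Lemma phiZr x y a : phi x (rscale y a) = phi x y * a.
Proof. by have := phi_lin x y 0 a 0; rewrite /rscale scaler0 !addr0 mulr0 addr0. Qed.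

Lemma phiDr x y z : phi x (y + z) = phi x y + phi x z.
Proof. by have := phi_lin x y z 1 1; rewrite /rscale !scale1r !mulr1. Qed.

Lemma phiDl x y z : phi (y + z) x = phi y x + phi z x.
Proof. by rewrite !(phi_refl x) phiDr sigmaD mulrDl. Qed.

Lemma phiZl x y a : phi (rscale y a) x = sigma a * phi y x.
Proof. by rewrite !(phi_refl x) phiZr sigmaM mulrA. Qed.

Lemma phi0r x : phi x 0 = 0.
Proof. by rewrite -(scale0r (0 : V)) -/(rscale 0 0) phiZr mulr0. Qed.

Lemma phi0l x : phi 0 x = 0.
Proof. by rewrite phi_refl phi0r sigma0 mul0r. Qed.

Lemma phiNr x y : phi x (- y) = - phi x y.
Proof. by apply/eqP; rewrite -addr_eq0 -phiDr addNr phi0r. Qed.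

Lemma phi_self_add u v :
  phi (u + v) (u + v) = phi u u + phi v v + sesq_trace (phi u v).
Proof.
rewrite phiDl !phiDr (phi_refl u v) /sesq_trace.
by rewrite [sigma _ * eps + _]addrC addrACA.
Qed.

Lemma isotropicZ u c : isotropic phi u -> isotropic phi (rscale u c).
Proof. by rewrite /isotropic phiZl phiZr => ->; rewrite mul0r mulr0. Qed.

Definition isotropic_span (v : V) : Prop :=
  exists s : seq (V * K),
    (forall p, p \in s -> isotropic phi p.1) /\
    v = \sum_(p <- s) rscale p.1 p.2.

Lemma isotropic_spanZ u c : isotropic phi u -> isotropic_span (rscale u c).
Proof.
move=> iso_u; exists [:: (u, c)]; split; last by rewrite big_seq1.
by move=> p; rewrite inE => /eqP ->.
Qed.

Lemma isotropic_spanD u v :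
  isotropic_span u -> isotropic_span v -> isotropic_span (u + v).
Proof.
move=> [s [iso_s ->]] [r [iso_r ->]]; exists (s ++ r); split; last first.
  by rewrite big_cat.
by move=> p; rewrite mem_cat => /orP [] ?; [apply: iso_s | apply: iso_r].
Qed.

Lemma trace_of_isotropic_span v :
  isotropic_span v -> exists t, phi v v = sesq_trace t.
Proof.
move=> [s [iso_s ->]]; elim: s iso_s => [|p s IH] iso_s.
  by exists 0; rewrite big_nil phi0l /sesq_trace sigma0 mul0r addr0.
have [|t Ht] := IH; first by move=> q qs; apply: iso_s; rewrite inE qs orbT.
have iso_p : isotropic phi (rscale p.1 p.2).
  by apply/isotropicZ/iso_s; rewrite inE eqxx.
rewrite big_cons; exists (phi (rscale p.1 p.2) (\sum_(q <- s) rscale q.1 q.2) + t).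
by rewrite phi_self_add iso_p Ht add0r addrC sesq_traceD.
Qed.

Lemma isotropic_span_pairing v y : isotropic_span v -> phi v y != 0 ->
  exists u, isotropic phi u /\ phi u y != 0.
Proof.
move=> [s [iso_s ->]]; rewrite (big_morph (phi^~ y) (phiDl y) (phi0l y)).
set term := fun p : V * K => phi (rscale p.1 p.2) y.
have [/hasP [p ps nz_p] _ | /hasPn zero_s] := boolP (has (fun p => term p != 0) s).
  exists p.1; split; first exact: iso_s.
  by move: nz_p; rewrite /term phiZl; apply: contraNneq => ->; rewrite mulr0.
by rewrite big1_seq ?eqxx // => p ps; apply/eqP/negPn/zero_s.
Qed.

Hypothesis divK : division_ring K.
Hypothesis sigma_inj : injective sigma.
Hypothesis eps_neq0 : eps != 0.

Lemma phi_sym_neq0 x y : phi x y != 0 -> phi y x != 0.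
Proof.
apply: contraNneq; rewrite phi_refl => E.
have : sigma (phi x y) = sigma 0.
  by rewrite sigma0; apply: (mulIr (divK eps_neq0)); rewrite E mul0r.
by move/sigma_inj ->.
Qed.

Hypothesis trace_phi : trace_valued sigma eps phi.

Lemma isotropic_shift a w : isotropic phi a -> phi a w != 0 ->
  exists c, isotropic phi (w + rscale a c).
Proof.
move=> iso_a nz_aw; have [t Ht] := trace_phi w.
have unit_wa : phi w a \is a GRing.unit by apply/divK/phi_sym_neq0.
exists (- ((phi w a)^-1 * t)).
have cross : phi w (rscale a (- ((phi w a)^-1 * t))) = - t.
  by rewrite phiZr mulrN mulrA mulrV ?mul1r.
rewrite /isotropic phi_self_add cross sesq_traceN Ht (isotropicZ _ iso_a).
by rewrite addr0 subrr.
Qed.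

Lemma isotropic_span_nonorth a w : isotropic phi a -> phi a w != 0 ->
  isotropic_span w.
Proof.
move=> iso_a nz_aw; have [c iso_wc] := isotropic_shift iso_a nz_aw.
have -> : w = (w + rscale a c) + rscale a (- c).
  by rewrite -addrA /rscale -scalerDl subrr scale0r addr0.
have -> : w + rscale a c = rscale (w + rscale a c) 1 by rewrite /rscale scale1r.
by apply: isotropic_spanD; apply: isotropic_spanZ.
Qed.

Lemma isotropic_span_all a : isotropic phi a -> ~ in_Rad phi a ->
  spanned_by_isotropic phi.
Proof.
move=> iso_a not_rad v.
have [b nz_ab] : exists b, phi a b != 0.
  have [b nz_ab] := not_all_ex_not _ _ not_rad; exists b; exact/eqP.
have [z_av | nz_av] := eqVneq (phi a v) 0; last first.
  exact: isotropic_span_nonorth nz_av.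
rewrite -(addrK b v); apply: isotropic_spanD; apply: (isotropic_span_nonorth iso_a).
  by rewrite phiDr z_av add0r.
by rewrite phiNr oppr_eq0.
Qed.

End ReflexiveSesquilinear.

Theorem mainTheorem4 (K : unitRingType) (V : lmodType K^c)
  (sigma : K -> K) (eps : K) (phi : V -> V -> K) :
  division_ring K ->
  sigma_eps_pair sigma eps ->
  reflexive_sesquilinear sigma eps phi ->
  (exists x y, phi x y != 0) ->
  (exists a : V, a != 0 /\ isotropic phi a) ->
  (spanned_by_isotropic phi <->
     (trace_valued sigma eps phi /\ exists a : V, isotropic phi a /\ ~ in_Rad phi a)).
Proof.
move=> divK [[sigmaD sigmaM [sigma_inv sigmaK _]] eps_neq0 _ _] [phi_lin phi_refl].
move=> [x0 [y0 nz_x0y0]] _.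
split=> [spanned | [trace_phi [a [iso_a not_rad]]]].
- split.
    move=> v; exact: (trace_of_isotropic_span sigmaD sigmaM phi_lin phi_refl
      (spanned v)).
  have [u [iso_u nz_u]] :=
    isotropic_span_pairing sigmaD sigmaM phi_lin phi_refl (spanned x0) nz_x0y0.
  by exists u; split=> // rad_u; rewrite rad_u eqxx in nz_u.
- exact: (isotropic_span_all sigmaD sigmaM phi_lin phi_refl divK
    (can_inj sigmaK) eps_neq0 trace_phi iso_a not_rad).
Qed.
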